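(* Let $G=(V,E)$ be a network, $s,t\in V$, and $S\in[S_{min},1]$. Every optimal solution $(\pi_1,\pi_2)$ of the CO-Constrained Survivability Min-QoS problem with bound $S$ is such that all its disjoint segments are shortest disjoint segments.
   Context: A network is a directed graph $G=(V,E)$ with $M=|E|$. Each link $e$ has failure probability $p_e\in(0,p_{max}]$ with $p_{max}<1$, and positive weight $w_e$. Let $S_{min}=(1-p_{max})^M$. Paths are identified with link sets. A survivable connection is a pair $(\pi_1,\pi_2)$ of simple $s$–$t$ paths; the two paths may coincide. Its survivability level is $\prod_{e\in\pi_1\cap\pi_2}(1-p_e)$, equal to $1$ if empty. Its CO-weight is $\sum_{e\in\pi_1\cup\pi_2}w_e$. CO-CSMQ problem: minimize CO-weight subject to survivability level $\ge S$. A survivable connection is viewed as a concatenation of alternating segments: - common segments consist of links common to $\pi_1$ and $\pi_2$; - disjoint segments consist of links exclusive to one of the paths. A disjoint segment with head node $u$ and tail node $v$ is the pair formed by the subpath of $\pi_1$ from $u$ to $v$ and the subpath of $\pi_2$ from $u$ to $v$, which are link-disjoint. The weight of a disjoint segment is the total weight of its links. It is a shortest disjoint segment if its weight is minimum among all pairs of link-disjoint paths from $u$ to $v$ in $G$. *)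

(* A network: finite node type V, finite link type E with
   source/destination maps (a directed graph, parallel links allowed),
   failure probabilities p and weights w with values in a real field R. *)
From mathcomp Require Import all_boot all_order all_algebra.
Set Implicit Arguments. Unset Strict Implicit. Unset Printing Implicit Defensive.
Import Order.TTheory GRing.Theory Num.Theory.
Local Open Scope ring_scope.

Section Network.
Variables (R : realFieldType) (V E : finType) (src dst : E -> V).

Fixpoint is_walk (x y : V) (q : seq E) : bool :=
  if q is e :: q' then (src e == x) && is_walk (dst e) y q' else x == y.

Definition simple_path (x y : V) (q : seq E) : bool :=
  is_walk x y q && uniq (x :: map dst q).

Definition surv_level (p : E -> R) (pi1 pi2 : seq E) : R :=
  \prod_(e : E | (e \in pi1) && (e \in pi2)) (1 - p e).

Definition co_weight (w : E -> R) (pi1 pi2 : seq E) : R :=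
  \sum_(e : E | (e \in pi1) || (e \in pi2)) w e.

Definition feasible (p : E -> R) (s t : V) (S : R) (pi1 pi2 : seq E) : Prop :=
  [/\ simple_path s t pi1, simple_path s t pi2 & S <= surv_level p pi1 pi2].

Definition optimal (p w : E -> R) (s t : V) (S : R) (pi1 pi2 : seq E) : Prop :=
  feasible p s t S pi1 pi2 /\
  forall r1 r2, feasible p s t S r1 r2 -> co_weight w pi1 pi2 <= co_weight w r1 r2.

Definition ends_common (a pi : seq E) : bool :=
  if rev a is e :: _ then e \in pi else true.
Definition starts_common (b pi : seq E) : bool :=
  if b is e :: _ then e \in pi else true.

(* (q1, q2) is a disjoint segment of (pi1, pi2) with head u and tail v:
   q1 (resp. q2) is the subpath of pi1 (resp. pi2) from u to v, it consists
   of links exclusive to pi1 (resp. pi2), and it is a maximal such run,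
   i.e. it is delimited on both sides by common links (or by s / t). *)
Definition disjoint_segment (pi1 pi2 : seq E) (u v : V) (q1 q2 : seq E) : Prop :=
  exists a1 b1 a2 b2,
    [/\ pi1 = a1 ++ q1 ++ b1, pi2 = a2 ++ q2 ++ b2,
        is_walk u v q1 & is_walk u v q2] /\
    all (fun e => e \notin pi2) q1 /\ all (fun e => e \notin pi1) q2 /\
    [/\ ends_common a1 pi2, ends_common a2 pi1,
        starts_common b1 pi2 & starts_common b2 pi1].

Definition seg_weight (w : E -> R) (q1 q2 : seq E) : R :=
  \sum_(e <- q1) w e + \sum_(e <- q2) w e.

Definition shortest_disjoint_segment (w : E -> R) (u v : V) (q1 q2 : seq E) : Prop :=
  forall r1 r2, simple_path u v r1 -> simple_path u v r2 ->
    all (fun e => e \notin r2) r1 ->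
    seg_weight w q1 q2 <= seg_weight w r1 r2.

End Network.

From mathcomp Require Import all_boot all_order all_algebra ring zify lra.
Set Implicit Arguments. Unset Strict Implicit. Unset Printing Implicit Defensive.
Import Order.TTheory GRing.Theory Num.Theory.
Local Open Scope ring_scope.

(* Suppose the disjoint segment (q1, q2) from u to v of an optimal connection
   (pi1, pi2) were heavier than some pair (r1, r2) of link-disjoint u-v paths.
   Consider the links of pi1 and pi2 outside the segment together with those of
   r1 and r2, the links common to pi1 and pi2 being doubled.  Every s-t cut of
   this multigraph is crossed by two distinct arcs: either pi1 and pi2 cross it
   outside the segment (through the two copies of a link if they cross at the
   same common link), or it separates u from v and r1, r2 cross it.  By Menger's
   theorem for two arc-disjoint paths (one flow augmentation along a residual
   path, then decomposition of the resulting 2-flow) the multigraph carries two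
   arc-disjoint s-t paths.  Projected to G and shortened, they form a connection
   whose shared links are shared by pi1 and pi2, hence a feasible one, and whose
   CO-weight is at most that of (pi1, pi2) minus w(q1, q2) plus w(r1, r2):
   this contradicts optimality. *)

Lemma uniq_cat3_notin_mid (T : eqType) (p q r : seq T) x :
  uniq (p ++ q ++ r) -> x \in p ++ r -> x \notin q.
Proof.
by rewrite (perm_uniq (permEl (perm_catCA p q r))) cat_uniq => /and3P [_ /hasPn + _]; apply.
Qed.

Lemma mem_cat3_sides (T : eqType) (p q r : seq T) x : x \in p ++ r -> x \in p ++ q ++ r.
Proof. by rewrite !mem_cat => /orP [] ->; rewrite ?orbT. Qed.

Section Walks.
Variables (V T : finType) (src dst : T -> V).
Implicit Types (x y z : V) (p q : seq T) (X : {set V}) (a : pred T).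
Local Notation walk := (is_walk src dst).
Local Notation simple := (simple_path src dst).

Definition leaving X : pred T := fun e => (src e \in X) && (dst e \notin X).

Lemma walk_last x y q : walk x y q -> last x (map dst q) = y.
Proof. by elim: q x => [|e q IH] x /=; [move/eqP | case/andP=> _ /IH]. Qed.

Lemma walk_endpoints x y x' y' q : q != [::] ->
  walk x y q -> walk x' y' q -> x = x' /\ y = y'.
Proof.
case: q => [|e q] //= _ /andP[/eqP <- w] /andP[/eqP <- w'].
by rewrite -(walk_last w) -(walk_last w').
Qed.

Lemma walk_cat_split x y p q : walk x y (p ++ q) ->
  exists z, walk x z p /\ walk z y q.
Proof.
elim: p x => [|e p IH] x /=; first by exists x.
by case/andP=> /eqP <- /IH [z [wp wq]]; exists z; rewrite eqxx wp.
Qed.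

Lemma walk_split_at x y q z : walk x y q -> z \in x :: map dst q ->
  exists p r, [/\ q = p ++ r, walk x z p & walk z y r].
Proof.
elim: q x => [|e q IH] x /=.
  by move=> w; rewrite inE => /eqP ->; exists [::], [::]; rewrite /= eqxx.
case/andP=> /eqP sx w; rewrite inE; case: eqP => [-> _|_ /= /(IH _ w)].
  by exists [::], (e :: q); rewrite /= sx eqxx w.
by case=> p [r [-> wp wr]]; exists (e :: p), r; rewrite /= sx eqxx wp.
Qed.

Lemma walk_leaving x y q X : walk x y q -> x \in X -> y \notin X ->
  exists2 e, e \in q & leaving X e.
Proof.
elim: q x => [|e q IH] x /=; first by move=> /eqP -> ->.
case/andP=> /eqP sx w xX yX; case: (boolP (dst e \in X)) => dX.
  by have [f fq lf] := IH _ w dX yX; exists f; rewrite // inE fq orbT.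
by exists e; rewrite ?inE ?eqxx // /leaving sx xX.
Qed.

Lemma walk_shorten x y q : walk x y q ->
  exists2 q', simple x y q' & {subset q' <= q}.
Proof.
elim: q x => [|e q IH] x /=.
  by move=> w; exists [::]; rewrite // /simple_path /= w.
case/andP=> /eqP sx /IH [q' /andP [w' uq'] sub].
case: (boolP (x \in dst e :: map dst q')) => [xq'|xNq'].
  have [p [r [def_q' wp wr]]] := walk_split_at w' xq'.
  exists r; last by move=> f fr; rewrite inE sub ?orbT // def_q' mem_cat fr orbT.
  have xp : x \in dst e :: map dst p by rewrite -(walk_last wp) mem_last.
  move: uq'; rewrite def_q' map_cat -cat_cons cat_uniq => /and3P [_ /hasPn disj ur].
  by rewrite /simple_path wr /= ur andbT; apply: contraL xp => /disj.
exists (e :: q'); first by rewrite /simple_path /= sx eqxx w' xNq'.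
by move=> f; rewrite !inE => /orP [-> //|/sub ->]; rewrite orbT.
Qed.

Lemma simple_path_uniq x y q : simple x y q -> uniq q.
Proof. by case/andP=> _ /= /andP [_ /map_uniq]. Qed.

Lemma walk_cat3_leaving x y p q r u v X : walk x y (p ++ q ++ r) -> walk u v q ->
  x \in X -> y \notin X ->
  (exists2 e, e \in p ++ r & leaving X e) \/ (u \in X /\ v \notin X).
Proof.
move=> w wq xX yX; have [m [wp /walk_cat_split [m' [wq' wr]]]] := walk_cat_split w.
have [mX|mNX] := boolP (m \in X); last first.
  by have [e ep le] := walk_leaving wp xX mNX; left; exists e; rewrite ?mem_cat ?ep.
have [m'X|m'NX] := boolP (m' \in X).
  by have [e er le] := walk_leaving wr m'X yX; left; exists e; rewrite ?mem_cat ?er ?orbT.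
right; have [q0|q0] := eqVneq q [::].
  by move: wq'; rewrite q0 /= => /eqP mm'; rewrite -mm' mX in m'NX.
by have [<- <-] := walk_endpoints q0 wq' wq.
Qed.

Definition arc_rel a : rel V :=
  fun x y => [exists e, [&& a e, src e == x & dst e == y]].

Lemma connect_walk a x y : connect (arc_rel a) x y -> exists2 q, walk x y q & all a q.
Proof.
case/connectP=> zs; elim: zs x => [|z zs IH] x /=.
  by move=> _ ->; exists [::]; rewrite /= ?eqxx.
case/andP=> /existsP [e /and3P [ae /eqP sx /eqP dz]] path_zs last_zs.
have [q wq aq] := IH _ path_zs last_zs.
by exists (e :: q); rewrite /= ?sx ?dz ?eqxx ?ae.
Qed.

Lemma connect_simple_path a x y : connect (arc_rel a) x y ->
  exists2 q, simple x y q & all a q.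
Proof.
case/connect_walk=> q wq aq; have [q' sq' sub] := walk_shorten wq.
by exists q' => //; apply/allP=> e /sub /(allP aq).
Qed.

Lemma connectN_cut a x y : ~~ connect (arc_rel a) x y ->
  exists X : {set V}, [/\ x \in X, y \notin X & forall e, leaving X e -> ~~ a e].
Proof.
move=> Nxy; exists [set z | connect (arc_rel a) x z]; rewrite !inE connect0 Nxy.
split=> // e; rewrite /leaving !inE => /andP [xs Nxd]; apply: contra Nxd => ae.
by apply: connect_trans xs (connect1 _); apply/existsP; exists e; rewrite ae !eqxx.
Qed.
End Walks.

Lemma walk_map (V T T' : finType) (src dst : T -> V) (f : T' -> T) x y (P : seq T') :
  is_walk (src \o f) (dst \o f) x y P -> is_walk src dst x y (map f P).
Proof. by elim: P x => [|p P IH] x //= /andP [-> /IH]. Qed.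

Lemma sum_indicator (R : pzSemiRingType) (I : finType) (A : pred I) i :
  \sum_(j | A j) ((i == j)%:R : R) = (A i)%:R.
Proof.
have [Ai|NAi] := boolP (A i).
  by rewrite (bigD1 i) //= eqxx big1 ?addr0 // => j /andP [_]; rewrite eq_sym => /negbTE ->.
by rewrite big1 // => j Aj; case: eqVneq => // ij; rewrite ij Aj in NAi.
Qed.

Section Flows.
Variables (V T : finType) (src dst : T -> V).
Implicit Types (x y z : V) (q : seq T) (X : {set V}) (g h : T -> int).
Local Notation walk := (is_walk src dst).
Local Notation simple := (simple_path src dst).
Local Notation leaving := (leaving src dst).

Definition entering X : pred T := fun e => (src e \notin X) && (dst e \in X).

(* [demand x y] is the net outflow of one unit of flow sent from x to y. *)
Definition demand x y z : int := (x == z)%:R - (y == z)%:R.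

Definition netflow g z : int := \sum_e g e * demand (src e) (dst e) z.

Lemma demand_trans x y y' z : demand x y z + demand y y' z = demand x y' z.
Proof. by rewrite addrA subrK. Qed.

Lemma demandN x y z : - demand x y z = demand y x z.
Proof. by rewrite opprB. Qed.

Lemma eq_netflow g h z : g =1 h -> netflow g z = netflow h z.
Proof. by move=> gh; apply: eq_bigr => e _; rewrite gh. Qed.

Lemma netflowD g h z : netflow (fun e => g e + h e) z = netflow g z + netflow h z.
Proof. by rewrite -big_split; apply: eq_bigr => e _; rewrite mulrDl. Qed.

Lemma netflowN g z : netflow (fun e => - g e) z = - netflow g z.
Proof. by rewrite -sumrN; apply: eq_bigr => e _; rewrite mulNr. Qed.

Lemma netflow_arc e z : netflow (fun f => (e == f)%:R) z = demand (src e) (dst e) z.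
Proof.
rewrite /netflow (bigD1 e) //= eqxx mul1r big1 ?addr0 // => f.
by rewrite eq_sym => /negbTE ->; rewrite mul0r.
Qed.

Lemma netflow_walk x y q z : walk x y q ->
  netflow (fun e => (count_mem e q)%:R) z = demand x y z.
Proof.
elim: q x => [|e q IH] x /=.
  by move/eqP <-; rewrite /demand subrr /netflow big1 // => f _; rewrite mul0r.
case/andP=> /eqP <- /IH netq.
rewrite (@eq_netflow _ (fun f => (e == f)%:R + (count_mem f q)%:R)) => [|f]; last first.
  by rewrite natrD.
by rewrite netflowD netflow_arc netq demand_trans.
Qed.

Lemma netflow_simple_path x y q z : simple x y q ->
  netflow (fun e => (e \in q)%:R) z = demand x y z.
Proof.
move=> sq; rewrite -(netflow_walk z (proj1 (andP sq))); apply: eq_netflow => e.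
by rewrite count_uniq_mem // (simple_path_uniq sq).
Qed.

Lemma sum_demand x y X : \sum_(z in X) demand x y z = (x \in X)%:R - (y \in X)%:R.
Proof. by rewrite sumrB !sum_indicator. Qed.

Lemma sum_netflow g X :
  \sum_(z in X) netflow g z = \sum_(e | leaving X e) g e - \sum_(e | entering X e) g e.
Proof.
rewrite exchange_big /= [S in _ = S - _]big_mkcond [S in _ = _ - S]big_mkcond -sumrB.
apply: eq_bigr => e _; rewrite -mulr_sumr sum_demand /leaving /entering.
by case: (src e \in X); case: (dst e \in X);
  rewrite /= ?subrr ?subr0 ?sub0r ?mulr0 ?mulr1 ?mulrN1.
Qed.

Lemma flow_simple_path g x y (k : int) : 0 < k -> (forall e, 0 <= g e) ->
  (forall z, netflow g z = k * demand x y z) -> x != y ->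
  exists2 q, simple x y q & all (fun e => 0 < g e) q.
Proof.
move=> k_gt0 g_ge0 netg xy.
have [/connect_simple_path //|/connectN_cut [X [xX yX cutX]]] :=
  boolP (connect (arc_rel src dst (fun e => 0 < g e)) x y).
have out0 : \sum_(e | leaving X e) g e = 0.
  by apply: big1 => e /cutX; rewrite -leNgt => ge0; apply/eqP; rewrite eq_le ge0 g_ge0.
have in_ge0 : 0 <= \sum_(e | entering X e) g e by apply: sumr_ge0.
have := sum_netflow g X; rewrite (eq_bigr _ (fun z _ => netg z)) -mulr_sumr sum_demand.
rewrite xX (negbTE yX) out0 /= subr0 mulr1 sub0r => k_eq.
by move: k_gt0; rewrite k_eq oppr_gt0 ltNge in_ge0.
Qed.
End Flows.

Section Menger.
Variables (V T : finType) (src dst : T -> V).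
Implicit Types (x y z : V) (P : seq T) (A : seq (T * bool)) (a : pred T) (g : T -> int).
Local Notation simple := (simple_path src dst).
Local Notation leaving := (leaving src dst).
Local Notation netflow := (netflow src dst).

Definition two_arc_connected a x y := forall X : {set V}, x \in X -> y \notin X ->
  exists e1 e2, [/\ e1 != e2, a e1 && a e2, leaving X e1 & leaving X e2].

(* Arcs of the residual graph: (e, true) traverses e forwards, (e, false) backwards. *)
Definition res_src (p : T * bool) := if p.2 then src p.1 else dst p.1.
Definition res_dst (p : T * bool) := if p.2 then dst p.1 else src p.1.

Definition residual a P : pred (T * bool) :=
  fun p => if p.2 then a p.1 && (p.1 \notin P) else p.1 \in P.

Definition res_flow A e : int := (count_mem (e, true) A)%:R - (count_mem (e, false) A)%:R.

Lemma netflow_res_walk x y A z : is_walk res_src res_dst x y A ->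
  netflow (res_flow A) z = demand x y z.
Proof.
elim: A x => [|[e b] A IH] x /=.
  move/eqP <-; rewrite /demand subrr /netflow big1 // => f _.
  by rewrite /res_flow subrr mul0r.
case/andP=> /eqP <- /IH; rewrite /res_src /res_dst; case: b => /= netA.
  rewrite (@eq_netflow _ _ _ _ _ (fun f => (e == f)%:R + res_flow A f)) => [|f].
    by rewrite netflowD netflow_arc netA demand_trans.
  by rewrite /res_flow /= !xpair_eqE /= ?andbT ?andbF ?add0n natrD addrA.
rewrite (@eq_netflow _ _ _ _ _ (fun f => - (e == f)%:R + res_flow A f)) => [|f].
  by rewrite netflowD netflowN netflow_arc netA demandN demand_trans.
by rewrite /res_flow /= !xpair_eqE /= ?andbT ?andbF ?add0n natrD opprD addrCA.
Qed.

Lemma residual_connect a x y P : two_arc_connected a x y -> simple x y P ->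
  connect (arc_rel res_src res_dst (residual a P)) x y.
Proof.
move=> cuts sP; apply/negPn/negP => /connectN_cut [Y [xY yY cutY]].
have [e1 [e2 [e12 /andP [a1 a2] l1 l2]]] := cuts Y xY yY.
have inP e : a e -> leaving Y e -> e \in P.
  by move=> ae le; apply: contraR (cutY (e, true) le) => eNP; rewrite /residual /= ae.
have := sum_netflow src dst (fun e => (e \in P)%:R) Y.
rewrite (eq_bigr _ (fun z _ => netflow_simple_path z sP)) sum_demand xY (negbTE yY) /=.
rewrite [S in _ = _ - S]big1 => [|e ent]; last first.
  have eNP : e \notin P.
    by apply: (cutY (e, false)); move: ent; rewrite /entering /leaving /= andbC.
  by rewrite (negbTE eNP).
rewrite (bigD1 e1) // (bigD1 e2) /= ?l2 1?eq_sym // !inP //.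
set S := \sum_(e | _) _; have : 0 <= S by apply: sumr_ge0.
lia.
Qed.

Definition augment P A e : int := (e \in P)%:R + res_flow A e.

Lemma augment_bounds a x y P A : all a P -> simple_path res_src res_dst x y A ->
  all (residual a P) A -> forall e, 0 <= augment P A e <= 1 /\ (0 < augment P A e -> a e).
Proof.
move=> aP sA rA e; rewrite /augment /res_flow !count_uniq_mem ?(simple_path_uniq sA) //.
have fwd : (e, true) \in A -> a e && (e \notin P) := allP rA (e, true).
have bwd : (e, false) \in A -> e \in P := allP rA (e, false).
have [eP|eNP] := boolP (e \in P).
  have fNA : ((e, true) \in A) = false by apply: contraTF eP => /fwd /andP [].
  by rewrite fNA (allP aP e eP); case: ((e, false) \in A).
rewrite (contraNF bwd eNP).
by case/boolP: ((e, true) \in A) => [/fwd /andP [-> _]|_].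
Qed.

Lemma netflow_augment x y P A z : simple x y P -> simple_path res_src res_dst x y A ->
  netflow (augment P A) z = 2 * demand x y z.
Proof.
move=> sP /andP [wA _].
by rewrite netflowD (netflow_simple_path _ sP) (netflow_res_walk _ wA); ring.
Qed.

Lemma unit_flow_two_paths g x y : x != y -> (forall e, 0 <= g e <= 1) ->
  (forall z, netflow g z = 2 * demand x y z) ->
  exists P1 P2, [/\ simple x y P1, simple x y P2, all (fun e => 0 < g e) P1,
    all (fun e => 0 < g e) P2 & all (fun e => e \notin P2) P1].
Proof.
move=> xy g01 netg; have g_ge0 e : 0 <= g e by case/andP: (g01 e).
have [P1 sP1 gP1] := flow_simple_path (k := 2) isT g_ge0 netg xy.
pose h e := g e - (e \in P1)%:R.
have h_ge0 e : 0 <= h e.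
  rewrite /h; case: (boolP (e \in P1)) => [/(allP gP1) /=|_]; last by rewrite subr0.
  lia.
have neth z : netflow h z = 1 * demand x y z.
  by rewrite netflowD netflowN (netflow_simple_path _ sP1) netg; ring.
have [P2 sP2 hP2] := flow_simple_path ltr01 h_ge0 neth xy.
exists P1, P2; split=> //.
  by apply: sub_all hP2 => e; rewrite /h; case: (e \in P1) => /=; lia.
apply/allP => e eP1; apply/negP => /(allP hP2); rewrite /h eP1 /=.
by have := g01 e; lia.
Qed.

Theorem two_arc_disjoint_paths a x y : two_arc_connected a x y ->
  exists P1 P2, [/\ simple x y P1, simple x y P2, all a P1, all a P2
    & all (fun e => e \notin P2) P1].
Proof.
move=> cuts; have [<-|xy] := eqVneq x y.
  by exists [::], [::]; rewrite /simple_path /= eqxx.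
have [P sP aP] : exists2 P, simple x y P & all a P.
  apply/connect_simple_path/negPn/negP => /connectN_cut [X [xX yX cutX]].
  by have [e [_ [_ /andP [ae _] le _]]] := cuts X xX yX; move/negP: (cutX e le).
have [A sA rA] := connect_simple_path (residual_connect cuts sP).
have [P1 [P2 [sP1 sP2 gP1 gP2 P12]]] := unit_flow_two_paths xy
  (fun e => proj1 (augment_bounds aP sA rA e)) (fun z => netflow_augment z sP sA).
have ga e : 0 < augment P A e -> a e := proj2 (augment_bounds aP sA rA e).
by exists P1, P2; split=> //; [apply: sub_all gP1 | apply: sub_all gP2].
Qed.
End Menger.

Section Sums.
Variables (R : numDomainType) (I : finType).
Implicit Types (A B : pred I) (F : I -> R).

Lemma ler_sum_subset A B F : (forall i, A i -> B i) -> (forall i, 0 <= F i) ->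
  \sum_(i | A i) F i <= \sum_(i | B i) F i.
Proof.
move=> AB F_ge0; have BA : [pred i | B i && A i] =1 A.
  by move=> i /=; apply/andP/idP => [[] | Ai]; last by rewrite AB.
by rewrite [leRHS](bigID A) /= (eq_bigl _ _ BA) lerDl sumr_ge0.
Qed.

Lemma sum_predU A B F : (forall i, A i -> ~~ B i) ->
  \sum_(i | A i || B i) F i = \sum_(i | A i) F i + \sum_(i | B i) F i.
Proof.
move=> AB; rewrite (bigID A) /=; congr (_ + _); apply: eq_bigl => i.
  by rewrite andb_idl // => ->.
by case: (boolP (A i)) => Ai /=; rewrite ?andbT // (negbTE (AB _ Ai)).
Qed.

Lemma ler_sum_predU A B F : (forall i, 0 <= F i) ->
  \sum_(i | A i || B i) F i <= \sum_(i | A i) F i + \sum_(i | B i) F i.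
Proof.
move=> F_ge0; have AB : [pred i | A i || B i] =1 [pred i | A i || (B i && ~~ A i)].
  by move=> i /=; case: (A i); rewrite ?andbT.
rewrite (eq_bigl _ _ AB) sum_predU => [|i /= ->]; last by rewrite andbF.
by rewrite lerD2l ler_sum_subset // => i /andP [].
Qed.

Lemma ler_prod_subset A B F : (forall i, A i -> B i) -> (forall i, 0 <= F i <= 1) ->
  \prod_(i | B i) F i <= \prod_(i | A i) F i.
Proof.
move=> AB F01; have BA : [pred i | B i && A i] =1 A.
  by move=> i /=; apply/andP/idP => [[] | Ai]; last by rewrite AB.
rewrite (bigID A) /= (eq_bigl _ _ BA) ler_piMr //.
  by apply: prodr_ge0 => i _; case/andP: (F01 i).
by apply: prodr_ile1 => i _; exact: F01.
Qed.
End Sums.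

Lemma surv_level_le (R : realFieldType) (E : finType) (p : E -> R) (pi1 pi2 Q1 Q2 : seq E) :
  (forall e, 0 <= 1 - p e <= 1) ->
  (forall e, e \in Q1 -> e \in Q2 -> (e \in pi1) && (e \in pi2)) ->
  surv_level p pi1 pi2 <= surv_level p Q1 Q2.
Proof. by move=> p01 sub; apply: ler_prod_subset => // e /andP []; exact: sub. Qed.

Section SegmentExchange.
Variables (V E : finType) (src dst : E -> V).
Variables (s t u v : V) (a1 q1 b1 a2 q2 b2 r1 r2 : seq E).
Local Notation walk := (is_walk src dst).
Local Notation simple := (simple_path src dst).
Let pi1 := a1 ++ q1 ++ b1.
Let pi2 := a2 ++ q2 ++ b2.
Hypotheses (pi1_path : simple s t pi1) (pi2_path : simple s t pi2).
Hypotheses (q1_walk : walk u v q1) (q2_walk : walk u v q2).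
Hypotheses (q1_excl : all (fun e => e \notin pi2) q1)
           (q2_excl : all (fun e => e \notin pi1) q2).
Hypotheses (r1_path : simple u v r1) (r2_path : simple u v r2).
Hypothesis r_disj : all (fun e => e \notin r2) r1.

Let common : pred E := fun e => (e \in pi1) && (e \in pi2).
Let rest : pred E := fun e => ((e \in pi1) || (e \in pi2)) && ~~ ((e \in q1) || (e \in q2)).
Let available : pred E := fun e => [|| rest e, e \in r1 | e \in r2].

(* Common links are doubled: a connection may share them without losing survivability. *)
Let doubled : pred (E * bool) := fun p => if p.2 then common p.1 else available p.1.

Let q1_notin e : e \in q1 -> e \notin pi2 := allP q1_excl e.
Let q2_notin e : e \in q2 -> e \notin pi1 := allP q2_excl e.

Let rest_sides1 e : e \in a1 ++ b1 -> rest e.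
Proof.
move=> eab; have epi1 : e \in pi1 := mem_cat3_sides q1 eab.
have eNq1 := uniq_cat3_notin_mid (simple_path_uniq pi1_path) eab.
rewrite /rest epi1 (negbTE eNq1) /=.
by apply: contraL epi1 => /q2_notin.
Qed.

Let rest_sides2 e : e \in a2 ++ b2 -> rest e.
Proof.
move=> eab; have epi2 : e \in pi2 := mem_cat3_sides q2 eab.
have eNq2 := uniq_cat3_notin_mid (simple_path_uniq pi2_path) eab.
rewrite /rest epi2 orbT (negbTE eNq2) orbF /=.
by apply: contraL epi2 => /q1_notin.
Qed.

Let common_rest e : common e -> rest e.
Proof.
case/andP=> e1 e2; rewrite /rest e1 /= negb_or.
by apply/andP; split; [apply: contraL e2 => /q1_notin | apply: contraL e1 => /q2_notin].
Qed.

Lemma exchange_two_arc_connected :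
  two_arc_connected (fun p => src p.1) (fun p => dst p.1) doubled s t.
Proof.
move=> X sX tX; have [/andP [uX vX]|uv] := boolP ((u \in X) && (v \notin X)).
  have [f1 f1r1 l1] := walk_leaving (proj1 (andP r1_path)) uX vX.
  have [f2 f2r2 l2] := walk_leaving (proj1 (andP r2_path)) uX vX.
  exists (f1, false), (f2, false); split=> //=.
    by rewrite xpair_eqE andbT; apply: contraTneq f2r2 => <-; exact: (allP r_disj).
  by rewrite /doubled /available /= f1r1 f2r2 !orbT.
have [[e1 e1ab l1]|[uX vX]] := walk_cat3_leaving (proj1 (andP pi1_path)) q1_walk sX tX;
  last by rewrite uX vX in uv.
have [[e2 e2ab l2]|[uX vX]] := walk_cat3_leaving (proj1 (andP pi2_path)) q2_walk sX tX;
  last by rewrite uX vX in uv.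
have [rest1 rest2] := (rest_sides1 e1ab, rest_sides2 e2ab).
have [e12|e12] := eqVneq e1 e2.
  exists (e1, false), (e1, true); split=> //=; first by rewrite xpair_eqE eqxx.
  have [e1pi1 e2pi2] := (mem_cat3_sides q1 e1ab, mem_cat3_sides q2 e2ab).
  by rewrite /doubled /available /common /= rest1 e1pi1 e12 e2pi2.
exists (e1, false), (e2, false); split=> //=; first by rewrite xpair_eqE negb_and e12.
by rewrite /doubled /available /= rest1 rest2.
Qed.

Lemma exchange_paths : exists Q1 Q2, [/\ simple s t Q1, simple s t Q2,
  forall e, e \in Q1 -> e \in Q2 -> (e \in pi1) && (e \in pi2)
  & forall e, (e \in Q1) || (e \in Q2) -> available e].
Proof.
have [P1 [P2 [sP1 sP2 dP1 dP2 P12]]] := two_arc_disjoint_paths exchange_two_arc_connected.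
have [Q1 sQ1 Q1P1] := walk_shorten (walk_map (proj1 (andP sP1))).
have [Q2 sQ2 Q2P2] := walk_shorten (walk_map (proj1 (andP sP2))).
have lift P e : e \in map fst P -> exists b, (e, b) \in P.
  by case/mapP=> [[f b] fb ->]; exists b.
exists Q1, Q2; split=> // e.
  move=> /Q1P1 /lift [c1 ec1] /Q2P2 /lift [c2 ec2].
  have : c1 != c2 by apply: contraTneq ec2 => <-; exact: (allP P12).
  case: c1 c2 ec1 ec2 => [] [] // ec1 ec2 _.
    exact: (allP dP1 _ ec1).
  exact: (allP dP2 _ ec2).
case/orP=> [/Q1P1|/Q2P2] /lift [c ec]; [move: (allP dP1 _ ec) | move: (allP dP2 _ ec)];
  by case: c {ec} => /= [/common_rest rest_e|//]; rewrite /available rest_e.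
Qed.

Lemma exchange_weight (R : realFieldType) (w : E -> R) Q1 Q2 : (forall e, 0 <= w e) ->
  (forall e, (e \in Q1) || (e \in Q2) -> available e) ->
  co_weight w Q1 Q2 + seg_weight w q1 q2 <= co_weight w pi1 pi2 + seg_weight w r1 r2.
Proof.
move=> w_ge0 Q_avail.
have q1_sub e : e \in q1 -> e \in pi1 by move=> eq1; rewrite /pi1 !mem_cat eq1 orbT.
have q2_sub e : e \in q2 -> e \in pi2 by move=> eq2; rewrite /pi2 !mem_cat eq2 orbT.
have seg_sum p q : uniq p -> uniq q ->
    seg_weight w p q = \sum_(e in p) w e + \sum_(e in q) w e.
  by move=> up uq; rewrite /seg_weight !big_uniq.
have [uq1 uq2] : uniq q1 /\ uniq q2.
  move: (simple_path_uniq pi1_path) (simple_path_uniq pi2_path).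
  by rewrite /pi1 /pi2 !cat_uniq => /and3P [_ _ /andP [-> _]] /and3P [_ _ /andP [-> _]].
rewrite !seg_sum ?(simple_path_uniq r1_path) ?(simple_path_uniq r2_path) //.
have co_pi : co_weight w pi1 pi2 =
    \sum_(e | rest e) w e + (\sum_(e in q1) w e + \sum_(e in q2) w e).
  rewrite /co_weight (bigID (fun e => (e \in q1) || (e \in q2))) /= addrC; congr (_ + _).
  rewrite -sum_predU => [|e /q1_notin]; last by apply: contra => /q2_sub.
  apply: eq_bigl => e; apply: andb_idl.
  by case/orP=> [/q1_sub|/q2_sub] ->; rewrite ?orbT.
have co_Q : co_weight w Q1 Q2 <=
    \sum_(e | rest e) w e + (\sum_(e in r1) w e + \sum_(e in r2) w e).
  apply: le_trans (ler_sum_subset Q_avail w_ge0) _.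
  by apply: le_trans (ler_sum_predU _ _ w_ge0) _; rewrite lerD2l ler_sum_predU.
by rewrite co_pi addrAC lerD2r.
Qed.
End SegmentExchange.

Theorem lemma3 (R : realFieldType) (V E : finType) (src dst : E -> V)
    (p w : E -> R) (pmax : R)
    (hpmax : pmax < 1)
    (hp : forall e, 0 < p e <= pmax)
    (hw : forall e, 0 < w e)
    (s t : V) (S : R)
    (hS : (1 - pmax) ^+ #|E| <= S <= 1)
    (pi1 pi2 : seq E) :
  optimal src dst p w s t S pi1 pi2 ->
  forall (u v : V) (q1 q2 : seq E),
    disjoint_segment src dst pi1 pi2 u v q1 q2 ->
    shortest_disjoint_segment src dst w u v q1 q2.
Proof.
move=> [[sp1 sp2 surv] opt] u v q1 q2.
move=> [a1 [b1 [a2 [b2 [[def1 def2 wq1 wq2] [q1_excl [q2_excl _]]]]]]] r1 r2 sr1 sr2 r12.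
subst pi1 pi2; rewrite leNgt; apply/negP => r_lt_q.
have [Q1 [Q2 [sQ1 sQ2 Q_common Q_avail]]] :=
  exchange_paths sp1 sp2 wq1 wq2 q1_excl q2_excl sr1 sr2 r12.
have p01 e : 0 <= 1 - p e <= 1 by have := hp e; case/andP => ? ?; apply/andP; split; lra.
have Q_feas : feasible src dst p s t S Q1 Q2.
  by split=> //; apply: le_trans surv (surv_level_le p01 Q_common).
have := exchange_weight sp1 sp2 q1_excl sr1 sr2 (fun e => ltW (hw e)) Q_avail.
have := opt _ _ Q_feas.
lra.
Qed.
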